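(* Let $\mathbf A$ be a finite algebra. Then $\mathbf A\in\mathcal K_{\mathrm{poly}}$ if and only if every subalgebra $\mathbf B$ of $\mathbf A$ (including $\mathbf A$) is in $\mathcal K_{\mathrm{surj}}$.
   Context: Algebras are sets with operations interpreting a purely functional signature. For a finite algebra $\mathbf A$, $c_{\mathbf A}(n)$ is the maximum of $|\mathrm{Hom}(\mathbf X,\mathbf A)|$ over algebras $\mathbf X$ in the signature of $\mathbf A$ with at most $n$ elements, and $c^s_{\mathbf A}(n)$ is the maximum number of surjective homomorphisms $\mathbf X\to\mathbf A$ over such $\mathbf X$. $\mathcal K_{\mathrm{poly}}$ is the class of finite algebras $\mathbf A$ with $c_{\mathbf A}(n)\in O(n^k)$ for some $k$; $\mathcal K_{\mathrm{surj}}$ is the class of finite algebras with $c^s_{\mathbf A}(n)\in O(n^k)$ for some $k$. *)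

(* (+ mathcomp-classical boolp for classical decidability of
   the Prop-valued homomorphism condition, since the signature may be infinite). *)
From HB Require Import structures.
From mathcomp Require Import all_boot.
From mathcomp Require Import boolp.

Set Implicit Arguments.
Unset Strict Implicit.
Unset Printing Implicit Defensive.

Record signature := Signature {
  sym : Type;
  arity : sym -> nat }.

Record algebra (S : signature) := Algebra {
  carrier :> finType;
  op : forall f : sym S, ('I_(arity f) -> carrier) -> carrier }.

Arguments op {S} a f args.

Section Algebras.
Variable S : signature.

Definition is_hom (X A : algebra S) (h : X -> A) : Prop :=
  forall (f : sym S) (args : 'I_(arity f) -> X),
    h (op X f args) = op A f (fun i => h (args i)).

Definition homs (X A : algebra S) : {set {ffun X -> A}} :=
  [set h : {ffun X -> A} | `[< is_hom h >] ].

Definition shoms (X A : algebra S) : {set {ffun X -> A}} :=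
  [set h : {ffun X -> A} | `[< is_hom h >] && [forall a, exists x, h x == a] ].

(* A \in K_poly: c_A(n) \in O(n^k) for some k, where c_A(n) is the max of
   |Hom(X,A)| over algebras X with at most n elements; "c_A(n) <= C n^k"
   is unfolded as "every such X has |Hom(X,A)| <= C n^k". *)
Definition K_poly (A : algebra S) : Prop :=
  exists k C N : nat, forall n : nat, N <= n ->
    forall X : algebra S, #|X| <= n -> #|homs X A| <= C * n ^ k.

Definition K_surj (A : algebra S) : Prop :=
  exists k C N : nat, forall n : nat, N <= n ->
    forall X : algebra S, #|X| <= n -> #|shoms X A| <= C * n ^ k.

Definition is_subuniverse (A : algebra S) (B : {set A}) : Prop :=
  forall (f : sym S) (args : 'I_(arity f) -> A),
    (forall i, args i \in B) -> op A f args \in B.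

Definition subalg (A : algebra S) (B : {set A}) (hB : is_subuniverse B) : algebra S :=
  @Algebra S {x : A | x \in B}
    (fun f args =>
       exist (fun x => x \in B) (op A f (fun i => val (args i)))
             (hB f (fun i => val (args i)) (fun i => valP (args i)))).

End Algebras.

(* Composing with the inclusion of a subalgebra B into A embeds Hom(X, B), and a fortiori
   the surjective homomorphisms onto B, into Hom(X, A); this gives one direction.
   Conversely, the image of a homomorphism X -> A is a subuniverse B, so Hom(X, A) is the
   disjoint union, over the finitely many subuniverses B of A, of the surjective
   homomorphisms X -> B; a finite sum of polynomially bounded functions is polynomially
   bounded. *)
From mathcomp Require Import all_boot.
From mathcomp Require Import boolp.

Set Implicit Arguments.
Unset Strict Implicit.
Unset Printing Implicit Defensive.

Section PolyBounded.
Variable S : signature.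

Definition poly_bounded (c : algebra S -> nat) : Prop :=
  exists k C N : nat, forall n : nat, N <= n ->
    forall X : algebra S, #|X| <= n -> c X <= C * n ^ k.

Lemma poly_bounded_le (c1 c2 : algebra S -> nat) :
  (forall X, c1 X <= c2 X) -> poly_bounded c2 -> poly_bounded c1.
Proof.
move=> le_c [k [C [N bnd]]]; exists k, C, N => n leNn X leXn.
exact: leq_trans (le_c X) (bnd n leNn X leXn).
Qed.

Lemma poly_bounded0 : poly_bounded (fun=> 0).
Proof. by exists 0, 0, 0. Qed.

Lemma poly_bounded_add (c1 c2 : algebra S -> nat) :
  poly_bounded c1 -> poly_bounded c2 -> poly_bounded (fun X => c1 X + c2 X).
Proof.
move=> [k1 [C1 [N1 bnd1]]] [k2 [C2 [N2 bnd2]]].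
exists (maxn k1 k2), (C1 + C2), (maxn 1 (maxn N1 N2)) => n.
rewrite !geq_max => /and3P [n_gt0 leN1n leN2n] X leXn.
have raise_exp k : k <= maxn k1 k2 -> n ^ k <= n ^ maxn k1 k2 by exact: leq_pexp2l.
rewrite mulnDl leq_add //.
- exact: leq_trans (bnd1 n leN1n X leXn) (leq_mul (leqnn _) (raise_exp _ (leq_maxl _ _))).
- exact: leq_trans (bnd2 n leN2n X leXn) (leq_mul (leqnn _) (raise_exp _ (leq_maxr _ _))).
Qed.

Lemma poly_bounded_sum (I : eqType) (r : seq I) (c : I -> algebra S -> nat) :
  (forall i, poly_bounded (c i)) -> poly_bounded (fun X => \sum_(i <- r) c i X).
Proof.
move=> bnd; elim: r => [|i r IHr].
  by apply: poly_bounded_le poly_bounded0 => X; rewrite big_nil.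
apply: poly_bounded_le (poly_bounded_add (bnd i) IHr) => X.
by rewrite big_cons.
Qed.

End PolyBounded.

Lemma homsP (S : signature) (X A : algebra S) (h : {ffun X -> A}) :
  reflect (is_hom h) (h \in homs X A).
Proof. by rewrite inE; apply: asboolP. Qed.

Section SubalgebraHoms.
Variables (S : signature) (A X : algebra S).

Lemma shoms_sub_homs : shoms X A \subset homs X A.
Proof. by apply/subsetP => h; rewrite !inE => /andP []. Qed.

Lemma hom_image_subuniverse (h : {ffun X -> A}) :
  is_hom h -> is_subuniverse [set h x | x : X].
Proof.
move=> hom_h f args args_in.
have /choice [xs hxs] : forall i, exists x, h x = args i.
  by move=> i; have /imsetP [x _ ->] := args_in i; exists x.
have -> : args = (fun i => h (xs i)) by apply: funext => i; rewrite hxs.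
by rewrite -hom_h imset_f.
Qed.

Variables (B : {set A}) (hB : is_subuniverse B).

Definition incl_ffun (g : {ffun X -> subalg hB}) : {ffun X -> A} := [ffun x => val (g x)].

Lemma incl_ffun_inj : injective incl_ffun.
Proof.
move=> g1 g2 eq_g; apply/ffunP => x; apply: val_inj.
by have := congr1 (fun h : {ffun X -> A} => h x) eq_g; rewrite !ffunE.
Qed.

Lemma incl_ffun_hom (g : {ffun X -> subalg hB}) : is_hom g -> is_hom (incl_ffun g).
Proof.
move=> hom_g f args; rewrite ffunE hom_g /=.
by congr (op A f); apply: funext => i; rewrite ffunE.
Qed.

Lemma card_homs_subalg_le : #|homs X (subalg hB)| <= #|homs X A|.
Proof.
rewrite -(card_in_imset (f := incl_ffun)); last by move=> ? ? _ _; apply: incl_ffun_inj.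
apply/subset_leq_card/subsetP => _ /imsetP [g /homsP hom_g ->].
exact/homsP/incl_ffun_hom.
Qed.

End SubalgebraHoms.

Section HomsOnto.
Variables (S : signature) (X A : algebra S).

Definition homs_onto (B : {set A}) : {set {ffun X -> A}} :=
  [set h in homs X A | [set h x | x : X] == B].

Lemma card_homs_partition : #|homs X A| = \sum_(B : {set A}) #|homs_onto B|.
Proof.
rewrite -sum1_card (partition_big (fun h : {ffun X -> A} => [set h x | x : X]) predT) //=.
by apply: eq_bigr => B _; rewrite -[RHS]sum1_card; apply: eq_bigl => h; rewrite /homs_onto inE.
Qed.

Lemma homs_onto_nonsub (B : {set A}) : ~ is_subuniverse B -> homs_onto B = set0.
Proof.
move=> nsubB; apply/setP => h; rewrite inE in_set0.
apply/negP => /andP [/homsP hom_h /eqP im_h].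
by apply: nsubB; rewrite -im_h; apply: hom_image_subuniverse.
Qed.

Lemma card_homs_onto_le (B : {set A}) (hB : is_subuniverse B) :
  #|homs_onto B| <= #|shoms X (subalg hB)|.
Proof.
rewrite -(card_in_imset (f := @incl_ffun S A X B hB)); last by move=> ? ? _ _; apply: incl_ffun_inj.
apply/subset_leq_card/subsetP => h; rewrite inE => /andP [/homsP hom_h /eqP im_h].
have h_in x : h x \in B by rewrite -im_h imset_f.
pose g : {ffun X -> subalg hB} := [ffun x => exist (fun y => y \in B) (h x) (h_in x)].
apply/imsetP; exists g; last by apply/ffunP => x; rewrite !ffunE.
rewrite inE; apply/andP; split.
  apply/asboolP => f args; apply: val_inj; rewrite /= !ffunE /= hom_h.
  by congr (op A f); apply: funext => i; rewrite ffunE.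
apply/forallP => -[y By]; have /imsetP [x _ hxy] : y \in [set h x | x : X] by rewrite im_h.
by apply/existsP; exists x; apply/eqP/val_inj; rewrite /= ffunE.
Qed.

End HomsOnto.

Theorem proposition2p1 (S : signature) (A : algebra S) :
  K_poly A <-> (forall (B : {set A}) (hB : is_subuniverse B), K_surj (subalg hB)).
Proof.
split=> [polyA B hB | surj_sub].
  apply: (@poly_bounded_le S _ (fun X => #|homs X A|)) polyA => X.
  exact: leq_trans (subset_leq_card (shoms_sub_homs _ _)) (card_homs_subalg_le _ _).
apply: (@poly_bounded_le S _ (fun X => \sum_(B : {set A}) #|homs_onto X B|)).
  by move=> X; rewrite card_homs_partition.
apply: poly_bounded_sum => B.
have [hB | nsubB] := pselect (is_subuniverse B).
  by apply: poly_bounded_le (surj_sub B hB) => X; apply: card_homs_onto_le.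
by apply: poly_bounded_le (poly_bounded0 S) => X; rewrite homs_onto_nonsub ?cards0.
Qed.
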